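(* Let $(X,T),(Y,S)$ be $1$-step shifts of finite type over a finite alphabet $\mathcal{A}$, let $F:\mathcal{A}^2\to\mathbb{R}$ and $f(x,y)=F(x(0),y(0))$. Let $(C_n)_{n\ge1}$ be a non-increasing sequence of nonnegative reals converging to $C$. Then $Y_{f,C}=\bigcap_{n\ge1}Y_{f,C_n}$. In particular, if $Y_{f,C_n}\neq\emptyset$ for all $n$, then $Y_{f,C}\neq\emptyset$.
   Context: $\mathcal{A}^{\mathbb{Z}}$ carries the product of discrete topologies and the left shift $(Tx)(j)=x(j+1)$. A shift is a nonempty compact $X\subseteq\mathcal{A}^{\mathbb{Z}}$ with $TX=X$; it is a $1$-step shift of finite type if there is $\mathcal{F}\subseteq\mathcal{A}^{\{0,1\}}$ with $X=\{x:(T^jx)|_{[0,1]}\notin\mathcal{F}\ \forall j\in\mathbb{Z}\}$. $\mathbb{S}_{[a,b]}f(x,y)=\sum_{j=a}^bf(T^jx,S^jy)$. For integers $a\le b$: $P_{a,b}=\{(v_1,v_2)\in\mathcal{A}^2:\exists x\in X,\ x(a)=v_1,x(b)=v_2\}$; for $(v_1,v_2)\in P_{a,b}$, $y\in Y$: $H_{a,b,v_1,v_2}(y)=\min\{\mathbb{S}_{[a,b]}f(x,y):x\in X,x(a)=v_1,x(b)=v_2\}$. For $C\ge0$, $Y_{f,C}$ is the set of $y\in Y$ such that for all integers $a\le b$ there is $(v_1,v_2)\in P_{a,b}$ with $H_{a,b,v_1,v_2}(y)\ge\max\{H_{a,b,v_1,v_2}(y'):y'\in Y,\ y'|_{\mathbb{Z}\setminus[a,b]}=y|_{\mathbb{Z}\setminus[a,b]}\}-C$.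 *)

From HB Require Import structures.
From mathcomp Require Import all_boot all_order all_algebra.
From mathcomp Require Import all_classical all_reals all_analysis.
Set Implicit Arguments. Unset Strict Implicit. Unset Printing Implicit Defensive.
Import Order.TTheory GRing.Theory Num.Theory.
Local Open Scope classical_set_scope.
Local Open Scope ring_scope.

Section Defs.
Variable A : finType.

Definition conf := int -> A.

Definition shiftk (k : int) (x : conf) : conf := fun j => x (j + k).

(* 1-step shift of finite type: nonempty and defined by forbidden 2-blocks
   (such a set is automatically compact and shift-invariant). *)
Definition is_1step_SFT (X : set conf) : Prop :=
  X !=set0 /\
  exists Fb : {pred A * A},
    forall x, X x <-> (forall j : int, ~~ Fb (x j, x (j + 1))).

Variable R : realType.

Definition fF (F : A -> A -> R) (x y : conf) : R := F (x 0) (y 0).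

Definition birk (f : conf -> conf -> R) (a b : int) (x y : conf) : R :=
  \sum_(i < (absz (b - a)).+1) f (shiftk (a + i%:Z) x) (shiftk (a + i%:Z) y).

Definition Pab (X : set conf) (a b : int) : set (A * A) :=
  [set v | exists2 x, X x & x a = v.1 /\ x b = v.2].

(* H_{a,b,v1,v2}(y): min (taken as inf, it is attained) *)
Definition Hab (X : set conf) (f : conf -> conf -> R) (a b : int)
    (v : A * A) (y : conf) : R :=
  inf [set birk f a b x y | x in [set x | X x /\ x a = v.1 /\ x b = v.2]].

Definition agree_out (a b : int) (y y' : conf) : Prop :=
  forall j : int, (j < a \/ b < j) -> y' j = y j.

Definition YfC (X Y : set conf) (f : conf -> conf -> R) (C : R) : set conf :=
  [set y | Y y /\
    forall a b : int, a <= b ->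
      exists2 v, Pab X a b v &
        Hab X f a b v y >=
          sup [set Hab X f a b v y' | y' in [set y' | Y y' /\ agree_out a b y y']] - C].

End Defs.

From HB Require Import structures.
From mathcomp Require Import all_boot all_order all_algebra.
From mathcomp Require Import all_classical all_reals all_analysis.
From mathcomp Require Import zify lra.
Set Implicit Arguments. Unset Strict Implicit. Unset Printing Implicit Defensive.
Import Order.TTheory GRing.Theory Num.Theory.
Import numFieldNormedType.Exports.
Local Open Scope classical_set_scope.
Local Open Scope ring_scope.

(* Since each
   [H_{a,b,v1,v2}] depends on [y] only through [y|[a,b]] and the sup over
   modifications of [y] inside [a,b] only through [y|[a-1,b+1]] (1-step SFT),
   membership in [Y_{f,c}] is a closed condition; and for fixed [a <= b] only
   finitely many pairs [(v1,v2)] compete, so one of them witnesses the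
   defining inequality for every [C_n], hence in the limit for [C].  For the
   nonemptiness claim, the sets [Y_{f,C_n}] are nested and closed in the
   compact space [A^Z], and a Koenig-type diagonal argument produces a point
   of their intersection, which is [Y_{f,C}]. *)

Lemma pigeonhole_antitone (T : finType) (Q : T -> nat -> Prop) :
  (forall v m n, (n <= m)%N -> Q v m -> Q v n) ->
  (forall n, exists v, Q v n) -> exists v, forall n, Q v n.
Proof.
move=> antiQ exQ; apply: contrapT => /forallNP noQ.
have /choice[g Hg] : forall v, exists n, ~ Q v n by move=> v; apply/existsNP.
have [v Qv] := exQ (\max_(v : T) g v).
by apply: (Hg v); apply: antiQ Qv; apply: leq_bigmax.
Qed.

Section YfC_threshold.
Variables (A : finType) (R : realType) (X Y : set (conf A)).
Variable f : conf A -> conf A -> R.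

Lemma le_YfC c c' : c <= c' -> YfC X Y f c `<=` YfC X Y f c'.
Proof.
move=> le_cc' y [Yy Hy]; split=> // a b ab.
have [v Pv] := Hy a b ab; exists v => //; lra.
Qed.

Lemma bigcap_YfC_sub (c : nat -> R) C :
  nonincreasing_seq c -> c @ \oo --> C ->
  \bigcap_n YfC X Y f (c n) `<=` YfC X Y f C.
Proof.
move=> c_anti cvgc y Hy; have [Yy _] := Hy 0%N I; split=> // a b ab.
pose s v := sup [set Hab X f a b v y' | y' in [set y' | Y y' /\ agree_out a b y y']].
have [v Hv] : exists v, forall n, Pab X a b v /\ s v - c n <= Hab X f a b v y.
  apply: pigeonhole_antitone => [v m n nm [Pv le_s]|n].
    by split=> //; apply: le_trans le_s; rewrite lerD2l lerN2; apply: c_anti.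
  by have [_ /(_ a b ab)[v Pv le_s]] := Hy n I; exists v.
exists v; first by case: (Hv 0%N).
suff : s v - Hab X f a b v y <= C by rewrite /s; lra.
rewrite -(cvg_lim _ cvgc) //; apply: limr_ge; first exact: cvgP cvgc.
by apply: nearW => n; have [_] := Hv n; lra.
Qed.

End YfC_threshold.

Definition agree_in (A : finType) (N : nat) (u y : conf A) : Prop :=
  forall j : int, - N%:Z < j < N%:Z -> u j = y j.

Section YfC_closed.
Variables (A : finType) (R : realType) (X Y : set (conf A)) (F : A -> A -> R).

Lemma birk_eq_on a b x w w' : a <= b ->
  (forall j, a <= j <= b -> w j = w' j) ->
  birk (fF F) a b x w = birk (fF F) a b x w'.
Proof.
move=> ab eqw; apply: eq_bigr => i _; rewrite /fF /shiftk; congr F.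
by apply: eqw; have := ltn_ord i; lia.
Qed.

Lemma Hab_eq_on a b v w w' : a <= b ->
  (forall j, a <= j <= b -> w j = w' j) ->
  Hab X (fF F) a b v w = Hab X (fF F) a b v w'.
Proof.
move=> ab eqw; rewrite /Hab; congr inf.
by apply/seteqP; split=> _ [x Hx <-]; exists x => //; apply: birk_eq_on => // j /eqw ->.
Qed.

Definition Hab_variants a b v w :=
  [set Hab X (fF F) a b v y' | y' in [set y' | Y y' /\ agree_out a b w y']].

Variable Fb : {pred A * A}.
Hypothesis HY : forall y, Y y <-> forall j : int, ~~ Fb (y j, y (j + 1)).

(* A modification of [w1] inside [a,b] is glued into [w2]; the glued
   configuration is admissible because no forbidden 2-block straddles [a-1,b+1]. *)
Lemma Hab_variants_sub a b v w1 w2 : a <= b -> Y w2 ->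
  (forall j, a - 1 <= j <= b + 1 -> w1 j = w2 j) ->
  Hab_variants a b v w1 `<=` Hab_variants a b v w2.
Proof.
move=> ab Yw2 eqw _ [y' [Yy' agy'] <-].
pose u := fun j => if a <= j <= b then y' j else w2 j.
have u_in j : a - 1 <= j <= b + 1 -> u j = y' j.
  move=> hj; rewrite /u; case: ifP => // /negbT out.
  by rewrite -eqw; [symmetry; apply: agy'; lia | lia].
have u_out j : j < a \/ b < j -> u j = w2 j.
  by move=> hj; rewrite /u ifF //; apply/negbTE; lia.
exists u; last by apply: Hab_eq_on => // j hj; apply: u_in; lia.
split; last by move=> j /u_out.
apply/HY => j; have [jin|jout] : a - 1 <= j <= b \/ j < a - 1 \/ b < j by lia.
  by rewrite !u_in; [exact: (HY y').1 Yy' j | lia | lia].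
by rewrite !u_out; [exact: (HY w2).1 Yw2 j | lia | lia].
Qed.

Lemma YfC_closed c y :
  (forall N, exists2 u, YfC X Y (fF F) c u & agree_in N u y) ->
  YfC X Y (fF F) c y.
Proof.
move=> approx; have Yy : Y y.
  apply/HY => j; have [u [Yu _] eqy] := approx (absz j + 2)%N.
  by rewrite -!eqy; [exact: (HY u).1 Yu j | lia | lia].
split=> // a b ab.
have [u [Yu Hu] eqy] := approx (absz a + absz b + 2)%N.
have eq_near j : a - 1 <= j <= b + 1 -> u j = y j by move=> hj; apply: eqy; lia.
have [v Pv Hv] := Hu a b ab; exists v => //.
have variantsE : Hab_variants a b v y = Hab_variants a b v u.
  by apply/seteqP; split; apply: Hab_variants_sub => // j /eq_near.
rewrite /Hab_variants in variantsE; rewrite variantsE (@Hab_eq_on a b v y u) //.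
by move=> j hj; rewrite eq_near //; lia.
Qed.

End YfC_closed.

Section Nested_compactness.
Variables (A : finType) (S : nat -> set (conf A)).
Hypothesis S_nested : forall n m, (n <= m)%N -> S m `<=` S n.
Hypothesis S_nonempty : forall n, S n !=set0.

Definition realized N z := forall n, exists2 u, S n u & agree_in N u z.

Lemma realized_extend N z : realized N z ->
  exists z', agree_in N z' z /\ realized N.+1 z'.
Proof.
move=> zN.
have [[l r] Hlr] : exists p : A * A, forall n, exists2 u, S n u &
    agree_in N u z /\ u (- N%:Z) = p.1 /\ u N%:Z = p.2.
  apply: pigeonhole_antitone => [p m n nm [u Su hu]|n].
    by exists u => //; apply: S_nested Su.
  by have [u Su hu] := zN n; exists (u (- N%:Z), u N%:Z), u.
exists (fun j => if j == N%:Z then r else if j == - N%:Z then l else z j).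
split=> [j hj|n]; first by rewrite ifF ?ifF //; apply/eqP; lia.
have [u Su [uz [ul ur]]] := Hlr n; exists u => // j hj /=.
case: eqP => [->|jr] //; case: eqP => [->|jl] //; apply: uz; lia.
Qed.

Lemma nested_realized_limit : exists y, forall N, realized N y.
Proof.
have [z0 Sz0] := S_nonempty 0%N.
have z0_realized : realized 0 z0.
  by move=> n; have [u Su] := S_nonempty n; exists u => // j; lia.
have /choice[ext Hext] : forall p : nat * conf A, exists z',
    realized p.1 p.2 -> agree_in p.1 z' p.2 /\ realized p.1.+1 z'.
  move=> [N z]; have [zN|nzN] := pselect (realized N z); last by exists z => /nzN.
  by have [z' Hz'] := realized_extend zN; exists z' => _.
pose zs := fix zs n := if n is n'.+1 then ext (n', zs n') else z0.
have zs_realized N : realized N (zs N).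
  by elim: N => // N IH; exact: (Hext (N, zs N) IH).2.
have zs_stable N M : (N <= M)%N -> agree_in N (zs M) (zs N).
  elim: M => [|M IH]; first by rewrite leqn0 => /eqP ->.
  rewrite leq_eqVlt => /orP[/eqP -> //|NM] j hj.
  by rewrite /= (Hext (M, zs M) (zs_realized M)).1 /=; [exact: IH | lia].
exists (fun j => zs (absz j).+1 j) => N n.
have [u Su uz] := zs_realized N n; exists u => // j hj.
by rewrite uz // (zs_stable (absz j).+1 N) //; lia.
Qed.

End Nested_compactness.

Theorem lemma3p7 (A : finType) (R : realType) (X Y : set (conf A))
  (F : A -> A -> R) (Cs : nat -> R) (C : R) :
  is_1step_SFT X -> is_1step_SFT Y ->
  (forall m n : nat, (1 <= m <= n)%N -> Cs n <= Cs m) ->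
  (forall n : nat, (1 <= n)%N -> 0 <= Cs n) ->
  Cs @ \oo --> C ->
  YfC X Y (fF F) C = \bigcap_(n in [set n : nat | (1 <= n)%N]) YfC X Y (fF F) (Cs n)
  /\ ((forall n : nat, (1 <= n)%N -> YfC X Y (fF F) (Cs n) !=set0) ->
      YfC X Y (fF F) C !=set0).
Proof.
move=> _ [_ [Fb HY]] Cs_anti _ cvgCs.
pose c n := Cs n.+1.
have c_anti : nonincreasing_seq c by move=> m n mn; apply: Cs_anti.
have cvgc : c @ \oo --> C by rewrite (cvg_shiftS Cs).
have C_le n : C <= c n.
  by rewrite -(cvg_lim _ cvgc) //; apply: nonincreasing_cvgn_ge => //; exact: cvgP cvgc.
have shiftE : \bigcap_(n in [set n : nat | (1 <= n)%N]) YfC X Y (fF F) (Cs n) =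
              \bigcap_n YfC X Y (fF F) (c n).
  apply/seteqP; split=> y Hy n //= n1; first exact: Hy.
  by rewrite -(prednK n1); apply: Hy.
have YfCE : YfC X Y (fF F) C = \bigcap_n YfC X Y (fF F) (c n).
  apply/seteqP; split; last exact: bigcap_YfC_sub.
  by move=> y Hy n _; apply: le_YfC (C_le n) _ Hy.
split; first by rewrite YfCE shiftE.
move=> nonempty.
have nested n m : (n <= m)%N -> YfC X Y (fF F) (c m) `<=` YfC X Y (fF F) (c n).
  by move=> nm; apply: le_YfC; apply: c_anti.
have [y Hy] := nested_realized_limit nested (fun n => nonempty n.+1 isT).
by exists y; rewrite YfCE => n _; apply: (YfC_closed HY) => N; exact: Hy N n.
Qed.
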